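(* Let $p,q,r,s$ be arbitrary integers and put $$x_1=pq(r^2-s^2)+q^2r^2,\quad x_2=-(p^2s(r+s)-q^2rs),\quad x_3=p^2r(r+s)+pqr^2-q^2rs,$$ $$x_4=-(p^2r(r+s)+pq(r^2-s^2)),\quad x_5=p^2s(r+s)-pqr^2-q^2r^2.$$ Let $$B=\begin{bmatrix} x_2 & -x_3 & 1\\ -x_4 & x_5 & 1\\ 1 & 1 & 0\end{bmatrix}.$$ Then $\det B = x_1$ and $\det(B^{(3)}) = x_1^3$.
   Context: For a matrix $M=(m_{ij})$, $M^{(3)}$ denotes the matrix $(m_{ij}^3)$ obtained by replacing each entry by its cube. *)

From mathcomp Require Import all_boot all_order all_algebra.
Set Implicit Arguments. Unset Strict Implicit. Unset Printing Implicit Defensive.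
Import GRing.Theory Num.Theory.
Local Open Scope ring_scope.

Definition cube_mx (R : pzRingType) (m n : nat) (M : 'M[R]_(m, n)) : 'M[R]_(m, n) :=
  map_mx (fun a => a ^+ 3) M.

Section X.
Variables p q r s : int.
Definition x1 : int := p * q * (r ^+ 2 - s ^+ 2) + q ^+ 2 * r ^+ 2.
Definition x2 : int := - (p ^+ 2 * s * (r + s) - q ^+ 2 * r * s).
Definition x3 : int := p ^+ 2 * r * (r + s) + p * q * r ^+ 2 - q ^+ 2 * r * s.
Definition x4 : int := - (p ^+ 2 * r * (r + s) + p * q * (r ^+ 2 - s ^+ 2)).
Definition x5 : int := p ^+ 2 * s * (r + s) - p * q * r ^+ 2 - q ^+ 2 * r ^+ 2.
End X.

Definition Bmx (p q r s : int) : 'M[int]_3 :=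
  \matrix_(i < 3, j < 3)
    nth 0 (nth [::] [:: [:: x2 p q r s; - x3 p q r s; 1];
                       [:: - x4 p q r s; x5 p q r s; 1];
                       [:: 1; 1; 0]] i) j.

(* Both determinants are linear in the four free entries, since B and B^(3)
   share the border of ones and the zero corner: det B = -(x2 + x3 + x4 + x5)
   and det B^(3) = -(x2^3 + x3^3 + x4^3 + x5^3).  The parametrisation is a
   solution of the system x1 + x2 + x3 + x4 + x5 = 0 = x1^3 + ... + x5^3,
   which is exactly what the two claims say. *)

From mathcomp Require Import all_boot all_algebra.
From mathcomp Require Import ring.
Local Open Scope ring_scope.
Import GRing.Theory.

Lemma det_mx33 (R : comNzRingType) (M : 'M[R]_3) : \det M =
  M 0 0 * M 1 1 * M 2 2 + M 0 1 * M 1 2 * M 2 0 + M 0 2 * M 1 0 * M 2 1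
  - M 0 2 * M 1 1 * M 2 0 - M 0 0 * M 1 2 * M 2 1 - M 0 1 * M 1 0 * M 2 2.
Proof.
(* Re-indexing by nat lets the closed ordinals produced by the cofactor
   expansion reduce to numerals. *)
pose N a b := M (inord a) (inord b).
have -> : M = \matrix_(i, j) N i j.
  by apply/matrixP=> i j; rewrite mxE /N !inord_val.
rewrite !(expand_det_row _ 0) !big_ord_recl big_ord0 /cofactor.
rewrite !(expand_det_row _ 0) !big_ord_recl !big_ord0 /cofactor !det_mx11 !mxE /=.
ring.
Qed.

Lemma det_bordered_mx33 (R : comNzRingType) (M : 'M[R]_3) :
  M 0 2 = 1 -> M 1 2 = 1 -> M 2 0 = 1 -> M 2 1 = 1 -> M 2 2 = 0 ->
  \det M = M 0 1 + M 1 0 - M 0 0 - M 1 1.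
Proof. by move=> M02 M12 M20 M21 M22; rewrite det_mx33 M02 M12 M20 M21 M22; ring. Qed.

Lemma det_bordered_cube_mx33 (R : comNzRingType) (M : 'M[R]_3) :
  M 0 2 = 1 -> M 1 2 = 1 -> M 2 0 = 1 -> M 2 1 = 1 -> M 2 2 = 0 ->
  \det (cube_mx M) = M 0 1 ^+ 3 + M 1 0 ^+ 3 - M 0 0 ^+ 3 - M 1 1 ^+ 3.
Proof.
move=> M02 M12 M20 M21 M22; rewrite det_bordered_mx33 ?mxE //.
- by rewrite M02 expr1n.
- by rewrite M12 expr1n.
- by rewrite M20 expr1n.
- by rewrite M21 expr1n.
- by rewrite M22 expr0n.
Qed.

Section Parametrisation.
Variables p q r s : int.

Lemma x_sum_eq0 : x1 p q r s + x2 p q r s + x3 p q r s + x4 p q r s + x5 p q r s = 0.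
Proof. by rewrite /x1 /x2 /x3 /x4 /x5; ring. Qed.

Lemma x_cube_sum_eq0 :
  x1 p q r s ^+ 3 + x2 p q r s ^+ 3 + x3 p q r s ^+ 3 + x4 p q r s ^+ 3
  + x5 p q r s ^+ 3 = 0.
Proof. by rewrite /x1 /x2 /x3 /x4 /x5; ring. Qed.

End Parametrisation.

Theorem mainTheorem3 (p q r s : int) :
  \det (Bmx p q r s) = x1 p q r s /\
  \det (cube_mx (Bmx p q r s)) = (x1 p q r s) ^+ 3.
Proof.
have [B02 B12 B20 B21 B22] : [/\ Bmx p q r s 0 2 = 1, Bmx p q r s 1 2 = 1,
    Bmx p q r s 2 0 = 1, Bmx p q r s 2 1 = 1 & Bmx p q r s 2 2 = 0].
  by split; rewrite mxE.
rewrite det_bordered_mx33 // det_bordered_cube_mx33 // !mxE /=.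
split; rewrite -[RHS]subr0.
- by rewrite -(x_sum_eq0 p q r s); ring.
- by rewrite -(x_cube_sum_eq0 p q r s); ring.
Qed.
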